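(* Let $G=\bigoplus_{i=1}^k\mathbb Z/p^{r_i}\mathbb Z$ and $a\in\mathcal F(G,K)$. Then $\mathrm{CharPoly}_{a,G}=(x-|a|)^{|G|}$. In particular, there exists a nonzero $a$-harmonic function on $G$ if and only if the constant function $1$ on $G$ is $a$-harmonic, if and only if $|a|=0$.
   Context: $K$ is a field of characteristic $p$. $\mathcal F(G,K)$ is the space of functions $G\to K$, $(f*a)(g)=\sum_hf(h)a(g-h)$, $\Delta_af=f*a$; $\mathrm{CharPoly}_{a,G}$ is the monic characteristic polynomial of $\Delta_a$ on $\mathcal F(G,K)$; $f$ is $a$-harmonic if $f*a=0$; $|a|=\sum_{u\in G}a(u)$. *)

From HB Require Import structures.
From mathcomp Require Import all_boot all_order all_algebra.
Set Implicit Arguments. Unset Strict Implicit. Unset Printing Implicit Defensive.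
Import GRing.Theory.
Local Open Scope ring_scope.

Section Generic.
Variables (G : finZmodType) (K : fieldType).

Definition conv (f a : {ffun G -> K}) : {ffun G -> K} :=
  [ffun g => \sum_(h : G) f h * a (g - h)].

Definition Delta (a : {ffun G -> K}) (f : {ffun G -> K}) := conv f a.

Definition harmonic (a f : {ffun G -> K}) : Prop := conv f a = 0.

Definition mass (a : {ffun G -> K}) : K := \sum_(u : G) a u.

Definition delta_fun (g : G) : {ffun G -> K} := [ffun x => (x == g)%:R].

Definition Delta_mx (a : {ffun G -> K}) : 'M[K]_#|G| :=
  \matrix_(i, j) Delta a (delta_fun (enum_val j)) (enum_val i).

Definition CharPoly (a : {ffun G -> K}) : {poly K} := char_poly (Delta_mx a).

End Generic.

(* the i-th summand is 'I_((p^r_i).-1.+1), i.e. Z/p^{r_i}Z since p^{r_i} > 0 *)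
Definition pgrp (p k : nat) (r : 'I_k -> nat) : Type :=
  {dffun forall i : 'I_k, 'I_((p ^ r i).-1.+1)}.

Section PGroup.
Variables (p k : nat) (r : 'I_k -> nat).
Local Notation T := (pgrp p r).

HB.instance Definition _ := Finite.on T.

Definition pg_zero : T := [ffun i => 0].
Definition pg_opp (x : T) : T := [ffun i => - x i].
Definition pg_add (x y : T) : T := [ffun i => x i + y i].

Lemma pg_addA : associative pg_add.
Proof. by move=> x y z; apply/ffunP=> i; rewrite !ffunE addrA. Qed.
Lemma pg_addC : commutative pg_add.
Proof. by move=> x y; apply/ffunP=> i; rewrite !ffunE addrC. Qed.
Lemma pg_add0 : left_id pg_zero pg_add.
Proof. by move=> x; apply/ffunP=> i; rewrite !ffunE add0r. Qed.
Lemma pg_addN : left_inverse pg_zero pg_opp pg_add.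
Proof. by move=> x; apply/ffunP=> i; rewrite !ffunE addNr. Qed.

HB.instance Definition _ :=
  GRing.isZmodule.Build T pg_addA pg_addC pg_add0 pg_addN.
End PGroup.

From HB Require Import structures.
From mathcomp Require Import all_boot all_order all_algebra.
From mathcomp Require fingroup cyclic.
Import GRing.Theory.
Local Open Scope ring_scope.
Set Implicit Arguments. Unset Strict Implicit. Unset Printing Implicit Defensive.

(* Write Delta_a = \sum_g a(g) T_g with T_g the translation by g.  The T_g
   commute and satisfy T_g^|G| = 1, and |G| = p^e is a power of the
   characteristic, so raising to the power |G| is additive on the algebra they
   span: Delta_a^|G| = \sum_g a(g)^|G| = |a|^|G|, i.e. Delta_a - |a| is
   nilpotent.  Hence CharPoly_a = (x - |a|)^|G| and |a| is the only eigenvalue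
   of Delta_a, so a nonzero a-harmonic function forces |a| = 0; conversely
   1 * a is the constant |a|. *)

Section FrobeniusSum.
Variables (R : nzRingType) (p : nat).
Hypothesis pcharRp : p \in [pchar R].

Lemma exprD_pcharX_comm e (x y : R) :
  GRing.comm x y -> (x + y) ^+ (p ^ e) = x ^+ (p ^ e) + y ^+ (p ^ e).
Proof.
move=> cxy; elim: e => [|e IHe]; first by rewrite !expr1.
rewrite expnSr !exprM IHe -!(pFrobenius_autE pcharRp) pFrobenius_autD_comm //.
exact/commrX/commr_sym/commrX/commr_sym.
Qed.

Lemma sumr_pcharX_comm e I (r : seq I) (F : I -> R) :
  (forall i j, GRing.comm (F i) (F j)) ->
  (\sum_(i <- r) F i) ^+ (p ^ e) = \sum_(i <- r) F i ^+ (p ^ e).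
Proof.
move=> cF; elim: r => [|i r IHr].
  by rewrite !big_nil expr0n expn_eq0 (gtn_eqF (prime_gt0 (pcharf_prime pcharRp))).
rewrite !big_cons exprD_pcharX_comm ?IHr //.
by apply: commr_sum => j _; apply: cF.
Qed.

End FrobeniusSum.

Section UnipotentCombination.
Variables (K : fieldType) (p e : nat) (I : finType) (c : I -> K).
Hypothesis pcharKp : p \in [pchar K].

Lemma unipotent_combination_nil (A : algType K) (u : I -> A) :
  (forall i j, GRing.comm (u i) (u j)) -> (forall i, u i ^+ (p ^ e) = 1) ->
  (\sum_i c i *: u i - (\sum_i c i)%:A) ^+ (p ^ e) = 0.
Proof.
move=> cu uN; have pcharAp : p \in [pchar A] by rewrite pchar_lalg.
set x := \sum_i _; set s := \sum_i c i.
have cxs : GRing.comm (x - s%:A) s%:A by apply/commr_sym/comm_alg.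
have xN : x ^+ (p ^ e) = s%:A ^+ (p ^ e).
  rewrite (sumr_pcharX_comm pcharAp); last first.
    by move=> i j; rewrite /GRing.comm -!scalerAl -!scalerAr cu !scalerA mulrC.
  under eq_bigr => i _ do rewrite exprZn uN.
  rewrite -scaler_suml -(sumr_pcharX_comm pcharKp) ?exprZn ?expr1n // => i j.
  exact: mulrC.
by apply/(addIr (s%:A ^+ (p ^ e))); rewrite add0r -exprD_pcharX_comm // subrK.
Qed.

Lemma mx_unipotent_combination_nil n (u : I -> 'M[K]_n) :
  (forall i j, GRing.comm (u i) (u j)) -> (forall i, u i ^+ (p ^ e) = 1) ->
  (\sum_i c i *: u i - (\sum_i c i)%:M) ^+ (p ^ e) = 0.
Proof.
case: n u => [|n] u cu uN; first exact: thinmx0.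
by rewrite -scalemx1; apply: unipotent_combination_nil.
Qed.

End UnipotentCombination.

Section NilpotentShift.
Variables (K : fieldType) (n : nat) (A : 'M[K]_n) (c : K) (m : nat).
Hypothesis Anil : (A - c%:M) ^+ m = 0.

Lemma char_poly_nil_shift : char_poly A = ('X - c%:P) ^+ n.
Proof.
set Y := 'X - c%:P; set B := map_mx polyC (A - c%:M).
have Bnil : B ^+ m = 0 by rewrite /B -rmorphXn Anil; apply: map_mx0.
have charAE : char_poly_mx A = Y%:M - B.
  by rewrite /char_poly_mx /B map_mxB map_scalar_mx raddfB opprB addrA subrK.
have cYB : GRing.comm Y%:M B by rewrite /GRing.comm -!mulmxE scalar_mxC.
have : char_poly A %| Y ^+ (m * n).
  have := subrXX_comm m cYB; rewrite Bnil subr0 -rmorphXn => /(congr1 determinant).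
  by rewrite det_scalar -mulmxE det_mulmx -charAE exprM => ->; apply: dvdp_mulIl.
case/dvdp_exp_XsubCP => k _.
rewrite eqp_monic ?char_poly_monic ?monic_exp ?monicXsubC // => /eqP charA.
by have := size_char_poly A; rewrite charA size_exp_XsubC => -[->].
Qed.

Lemma eigenvalue_nil_shift b (v : 'cV_n) : A *m v = b *: v -> v != 0 -> b = c.
Proof.
move=> Av v_neq0.
have Akv k : (A - c%:M) ^+ k *m v = (b - c) ^+ k *: v.
  elim: k => [|k IHk]; first by rewrite expr0 mul1mx scale1r.
  rewrite exprSr -mulmxE -mulmxA mulmxBl Av mul_scalar_mx -scalerBl -scalemxAr IHk.
  by rewrite scalerA -exprS.
move: (Akv m); rewrite Anil mul0mx => /esym/eqP.
by rewrite scaler_eq0 (negbTE v_neq0) orbF expf_eq0 subr_eq0 => /andP[_ /eqP].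
Qed.

End NilpotentShift.

Lemma mulrn_card (G : finZmodType) (x : G) : x *+ #|G| = 0.
Proof.
rewrite -cardsT.
exact: (@cyclic.expg_cardG (FinRing.Zmodule_to_finGroup G) (fingroup.setT_group _) x (in_setT x)).
Qed.

Section DeltaMatrix.
Variables (G : finZmodType) (K : fieldType).
Implicit Types (a f : {ffun G -> K}) (g h : G).

Lemma sum_enum_val (F : G -> K) : \sum_(i < #|G|) F (enum_val i) = \sum_x F x.
Proof. by rewrite (big_enum_val F). Qed.

(* The matrix of f |-> f(. - g), i.e. of convolution with the indicator of g. *)
Definition shift_mx g : 'M[K]_#|G| :=
  \matrix_(i, j) (enum_val i - enum_val j == g)%:R.

Lemma Delta_mxE a i j : Delta_mx a i j = a (enum_val i - enum_val j).
Proof.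
rewrite mxE /Delta /conv ffunE (bigD1 (enum_val j)) //= ffunE eqxx mul1r.
by rewrite big1 ?addr0 // => h /negbTE hj; rewrite ffunE hj mul0r.
Qed.

Lemma Delta_mx_shift a : Delta_mx a = \sum_g a g *: shift_mx g.
Proof.
apply/matrixP=> i j; rewrite summxE Delta_mxE (bigD1 (enum_val i - enum_val j)) //=.
rewrite !mxE eqxx mulr1 big1 ?addr0 // => g /negbTE gij.
by rewrite !mxE eq_sym gij mulr0.
Qed.

Lemma shift_mxD g h : shift_mx g * shift_mx h = shift_mx (g + h).
Proof.
apply/matrixP=> i j; rewrite -mulmxE !mxE.
under eq_bigr => k _ do rewrite !mxE.
rewrite (sum_enum_val (fun x => (enum_val i - x == g)%:R * (x - enum_val j == h)%:R)).
rewrite (bigD1 (enum_val i - g)) //= big1 ?addr0.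
  by rewrite opprB addrC subrK eqxx mul1r addrAC subr_eq [h + g]addrC.
by move=> x /negbTE xg; rewrite subr_eq addrC -subr_eq eq_sym xg mul0r.
Qed.

Lemma shift_mx0 : shift_mx 0 = 1.
Proof. by apply/matrixP=> i j; rewrite !mxE subr_eq0 (inj_eq enum_val_inj). Qed.

Lemma shift_mxMn g m : shift_mx g ^+ m = shift_mx (g *+ m).
Proof.
elim: m => [|m IHm]; first by rewrite expr0 mulr0n shift_mx0.
by rewrite exprS IHm shift_mxD mulrS.
Qed.

Lemma Delta_mx_col a f :
  Delta_mx a *m \col_i f (enum_val i) = \col_i Delta a f (enum_val i).
Proof.
apply/matrixP=> i j; rewrite !mxE /Delta /conv ffunE.
under eq_bigr => k _ do rewrite Delta_mxE mxE mulrC.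
exact: (sum_enum_val (fun x => f x * a (enum_val i - x))).
Qed.

Lemma conv_cst1 a : conv [ffun=> 1] a = [ffun=> mass a].
Proof.
apply/ffunP=> g; rewrite !ffunE /mass (reindex_inj (subrI g)) /=.
by apply: eq_bigr => h _; rewrite ffunE mul1r subKr.
Qed.

Lemma harmonic_cst1 a : harmonic a [ffun=> 1] <-> mass a = 0.
Proof.
rewrite /harmonic conv_cst1; split=> [/ffunP/(_ 0)|ma0]; first by rewrite !ffunE.
by apply/ffunP=> g; rewrite !ffunE.
Qed.

End DeltaMatrix.

Section PGroup.
Variables (G : finZmodType) (K : fieldType) (p e : nat).
Hypotheses (pcharKp : p \in [pchar K]) (cardG : #|G| = (p ^ e)%N).
Implicit Types a f : {ffun G -> K}.

Lemma Delta_mx_sub_mass_nil a : (Delta_mx a - (mass a)%:M) ^+ (p ^ e) = 0.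
Proof.
rewrite Delta_mx_shift; apply: mx_unipotent_combination_nil => // [g h | g].
  by rewrite /GRing.comm !shift_mxD addrC.
by rewrite shift_mxMn -cardG mulrn_card shift_mx0.
Qed.

Lemma CharPoly_pgroup a : CharPoly a = ('X - (mass a)%:P) ^+ #|G|.
Proof. exact: char_poly_nil_shift (Delta_mx_sub_mass_nil a). Qed.

Lemma harmonic_mass_eq0 a f : f != 0 -> harmonic a f -> mass a = 0.
Proof.
move=> f_neq0 hf; symmetry.
apply: (eigenvalue_nil_shift (Delta_mx_sub_mass_nil a) (v := \col_i f (enum_val i))).
  rewrite Delta_mx_col /Delta hf scale0r.
  by apply/matrixP=> i j; rewrite !mxE ffunE.
apply: contra f_neq0 => /eqP v0; apply/eqP/ffunP=> x.
by move/matrixP/(_ (enum_rank x) 0): v0; rewrite !mxE enum_rankK ffunE.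
Qed.

Lemma harmonic_neq0P a :
  (exists f, f != 0 /\ harmonic a f) <-> harmonic a [ffun=> 1].
Proof.
split=> [[f [f_neq0 hf]] | h1]; first exact/harmonic_cst1/(harmonic_mass_eq0 f_neq0).
exists [ffun=> 1]; split=> //; apply/eqP => /ffunP/(_ 0)/eqP.
by rewrite !ffunE oner_eq0.
Qed.

End PGroup.

Lemma card_pgrp (p k : nat) (r : 'I_k -> nat) :
  (0 < p)%N -> #|{: pgrp p r}| = (p ^ (\sum_i r i))%N.
Proof.
move=> p_gt0; rewrite card_dep_ffun foldrE big_map expn_sum -big_enum /=.
by apply: eq_bigr => i _; rewrite card_ord prednK // expn_gt0 p_gt0.
Qed.

Unset Implicit Arguments.
Theorem corollary1p3 (K : fieldType) (p : nat) (hp : p \in [pchar K])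
    (k : nat) (r : 'I_k -> nat) (a : {ffun pgrp p r -> K}) :
  CharPoly a = ('X - (mass a)%:P) ^+ #|{: pgrp p r}|
  /\ ((exists f : {ffun pgrp p r -> K}, f != 0 /\ harmonic a f)
        <-> harmonic a [ffun=> 1])
  /\ (harmonic a [ffun=> 1] <-> mass a = 0).
Proof.
have cardG := card_pgrp r (prime_gt0 (pcharf_prime hp)).
split; first exact: CharPoly_pgroup hp cardG a.
by split; [exact: harmonic_neq0P hp cardG a | exact: harmonic_cst1].
Qed.
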